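(* Let $\varphi:K\to L$ be a strong covering. Then (i) the multiset of eigenvalues of the combinatorial up-Laplacian $L^{up}_n(L)$ is contained in the multiset of eigenvalues of $L^{up}_n(K)$; and (ii) the multiset of eigenvalues of the normalized up-Laplacian $\Delta^{up}_n(L)$ is contained in the multiset of eigenvalues of $\Delta^{up}_n(K)$.
   Context: $S_j(K)$ is the set of $j$-faces. A simplicial map $\varphi:K\to L$ is a vertex map sending simplices to simplices; it is a covering map if $K$ is connected and for every simplex $G$ of $L$, $\varphi^{-1}(G)$ is a union of pairwise disjoint simplices $F_i$ with $\varphi|_{F_i}:F_i\to G$ bijective; a covering map is a strong covering if for every $G\in S_n(L)$ that is a facet of some $\bar G\in S_{n+1}(L)$ and every $F\in\varphi^{-1}(G)$ there is $\bar F\in S_{n+1}(K)$ with $F\subset\bar F$, $\varphi(\bar F)=\bar G$. For a weight function $w>0$ on faces, $C^j(X,\mathbb{R})$ (real cochains on oriented $j$-faces) has inner product $(f,g)=\sum_{F\in S_j}w(F)f([F])g([F])$, coboundary $(\delta_jf)([v_0,..,v_{j+1}])=\sum_i(-1)^if([v_0,..,\hat v_i,..,v_{j+1}])$, adjoint $(\delta_j^*\bar f)([F])=\sum_{\bar F\in S_{j+1},\bar F\supset F}\frac{w(\bar F)}{w(F)}\mathrm{sgn}([F],\partial[\bar F])\bar f([\bar F])$ with $\mathrm{sgn}([v_0,..,\hat v_i,..,v_{j+1}],\partial[v_0,..,v_{j+1}])=(-1)^i$, and up-Laplacian $\delta_n^*\delta_n$. $L^{up}_n(X)$ is the up-Laplacian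 for $w\equiv1$. $\Delta^{up}_n(X)$ is the up-Laplacian for the normalized weights $w(\bar F)=1$ for $\bar F\in S_{n+1}(X)$ and $w(F)=\deg F:=|\{\bar F\in S_{n+1}(X):F\subset\bar F\}|$ for $F\in S_n(X)$ with $\deg F\ge1$ (any positive weight on $n$-faces of degree $0$, on which the up-Laplacian does not depend). *)

From HB Require Import structures.
From mathcomp Require Import all_boot all_order all_algebra.
From mathcomp Require Import reals.
Set Implicit Arguments. Unset Strict Implicit. Unset Printing Implicit Defensive.
Import Order.TTheory GRing.Theory Num.Theory.
Local Open Scope ring_scope.

Definition is_complex (V : finType) (K : {set {set V}}) : Prop :=
  set0 \notin K /\
  (forall F G : {set V}, F \in K -> G \subset F -> G != set0 -> G \in K).

Definition faces (V : finType) (K : {set {set V}}) (j : nat) : {set {set V}} :=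
  [set F in K | #|F| == j.+1].

Definition connected_complex (V : finType) (K : {set {set V}}) : Prop :=
  (exists v : V, [set v] \in K) /\
  (forall u v : V, [set u] \in K -> [set v] \in K ->
     connect [rel x y | [set x; y] \in K] u v).

Definition simplicial_map (V W : finType) (K : {set {set V}}) (L : {set {set W}})
  (phi : V -> W) : Prop :=
  forall F, F \in K -> phi @: F \in L.

(* Covering map: K connected, and for every simplex G of L, the preimage
   phi^{-1}(G) (the subcomplex of simplices of K mapped into G) is a nonempty
   union of pairwise disjoint simplices F_i of K, each mapped bijectively onto G. *)
Definition covering_map (V W : finType) (K : {set {set V}}) (L : {set {set W}})
  (phi : V -> W) : Prop :=
  [/\ simplicial_map K L phi, connected_complex K &
   forall G, G \in L ->
     exists P : {set {set V}},
       [/\ P != set0,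
           (forall Fi, Fi \in P -> [/\ Fi \in K, {in Fi &, injective phi} & phi @: Fi = G]),
           (forall Fi Fj, Fi \in P -> Fj \in P -> Fi != Fj -> [disjoint Fi & Fj]) &
           (forall F, F \in K -> (phi @: F \subset G) <-> exists2 Fi, Fi \in P & F \subset Fi)]].

Definition strong_covering (V W : finType) (K : {set {set V}}) (L : {set {set W}})
  (phi : V -> W) : Prop :=
  covering_map K L phi /\
  forall (m : nat) (G Gb : {set W}), G \in faces L m -> Gb \in faces L m.+1 ->
    G \subset Gb ->
    forall F, F \in faces K m -> phi @: F = G ->
      exists2 Fb, Fb \in faces K m.+1 & F \subset Fb /\ phi @: Fb = Gb.

(* Orientation: every face is oriented by the increasing order of its vertices
   (order of enum_rank).  sgn([F], d[Fb]) = (-1)^i where the vertex of Fb not in F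
   is the i-th (from 0) vertex of Fb. *)
Definition orient_sgn (R : pzRingType) (V : finType) (F Fb : {set V}) : R :=
  (-1) ^+ #|[set u in Fb | [exists v in Fb :\: F, (enum_rank u < enum_rank v)%N]]|.

(* Matrix of the up-Laplacian delta_n^* delta_n on C^n(K,R) with weight w,
   in the basis of indicator cochains of the positively oriented n-faces:
   entry (F, F') = sum over (n+1)-faces Fb containing F and F' of
   w(Fb)/w(F) * sgn([F], d[Fb]) * sgn([F'], d[Fb]). *)
Definition up_laplacian (R : fieldType) (V : finType) (K : {set {set V}}) (n : nat)
  (w : {set V} -> R) : 'M[R]_(#|faces K n|) :=
  \matrix_(i, j)
    let F := enum_val i in let F' := enum_val j in
    \sum_(Fb in faces K n.+1 | (F :|: F') \subset Fb)
       w Fb / w F * orient_sgn R F Fb * orient_sgn R F' Fb.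

Definition face_deg (V : finType) (K : {set {set V}}) (n : nat) (F : {set V}) : nat :=
  #|[set Fb in faces K n.+1 | F \subset Fb]|.

Definition comb_up_laplacian (R : fieldType) (V : finType) (K : {set {set V}}) (n : nat) :=
  up_laplacian K n (fun _ => 1 : R).

(* Delta^up_n(K): w = 1 on (n+1)-faces, w = deg on n-faces (rows of degree-0
   faces vanish, the weight there being irrelevant). *)
Definition norm_up_laplacian (R : fieldType) (V : finType) (K : {set {set V}}) (n : nat) :=
  up_laplacian K n
    (fun X => if #|X| == n.+2 then 1 else (face_deg K n X)%:R : R).

Definition eigen_multiset_sub (R : fieldType) (p q : nat) (A : 'M[R]_p) (B : 'M[R]_q) : Prop :=
  forall lambda : R, (mup lambda (char_poly A) <= mup lambda (char_poly B))%N.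

From HB Require Import structures.
From mathcomp Require Import all_boot all_order all_algebra.
From mathcomp Require Import reals ring.
Set Implicit Arguments. Unset Strict Implicit. Unset Printing Implicit Defensive.
Import GRing.Theory.
Local Open Scope ring_scope.

(* Pulling cochains back along phi gives an injective map
   phi^* : C^n(L) -> C^n(K): every n-face of L lifts, and phi is injective
   on simplices.  The strong covering property makes phi a bijection from the
   (n+1)-cofaces of each n-face F of K onto those of phi(F), preserving the
   weights (in particular the degrees), so phi^* intertwines the two
   up-Laplacians.  Hence C^n(L) is a Laplacian-invariant subspace of C^n(K)
   on which the Laplacian of K acts as that of L, and the characteristic
   polynomial of the latter divides that of the former. *)

Section CharPoly.
Variable F : fieldType.

Lemma char_poly_trmx n (A : 'M[F]_n) : char_poly A^T = char_poly A.
Proof.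
rewrite /char_poly -det_tr /char_poly_mx linearB /= tr_scalar_mx.
by congr (\det (_ - _)); apply/matrixP=> i j; rewrite !mxE.
Qed.

Lemma char_poly_conj n (U A : 'M[F]_n) : U \in unitmx ->
  char_poly (U *m A *m invmx U) = char_poly A.
Proof.
move=> Uu; rewrite /char_poly /char_poly_mx !map_mxM.
set U' := map_mx polyC U; set V' := map_mx polyC (invmx U).
have U'V' : U' *m V' = 1%:M by rewrite -map_mxM mulmxV // map_mx1.
have -> : 'X%:M - U' *m map_mx polyC A *m V' = U' *m ('X%:M - map_mx polyC A) *m V'.
  by rewrite mulmxBr mulmxBl mul_mx_scalar -scalemxAl U'V' scalemx1.
by rewrite !det_mulmx mulrAC -det_mulmx U'V' det1 mul1r.
Qed.

Lemma char_poly_lblock p r (A : 'M[F]_p) (C : 'M[F]_(r, p)) (D : 'M[F]_r) :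
  char_poly (block_mx A 0 C D) = char_poly A * char_poly D.
Proof.
rewrite /char_poly /char_poly_mx (scalar_mx_block p r) map_block_mx.
by rewrite raddf0 opp_block_mx add_block_mx oppr0 addr0 det_lblock.
Qed.

Lemma char_poly_dvd_intertwine p q (A : 'M[F]_p) (B : 'M[F]_q) (P : 'M[F]_(p, q)) :
  row_free P -> A *m P = P *m B -> char_poly A %| char_poly B.
Proof.
move=> freeP APB; have le_pq : (p <= q)%N by rewrite -(eqP freeP) rank_leq_col.
move: (q - p)%N (subnKC le_pq) => r def_q; subst q.
pose L := col_ebase P; pose U := row_ebase P.
have Lu : L \in unitmx by apply: col_ebase_unit.
have Uu : U \in unitmx by apply: row_ebase_unit.
have defP : P = L *m pid_mx p *m U.
  have pidE : pid_mx (\rank P) = pid_mx p :> 'M[F]_(p, p + r) by rewrite (eqP freeP).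
  by rewrite -pidE mulmx_ebase.
pose A' := invmx L *m A *m L; pose B' := U *m B *m invmx U.
have A'B' : A' *m pid_mx p = pid_mx p *m B'.
  apply: (can_inj (mulmxK Uu)); apply: (can_inj (mulKmx Lu)).
  rewrite /A' /B' !mulmxA (mulmxV Lu) mul1mx -!mulmxA (mulVmx Uu) mulmx1.
  by rewrite (mulmxA L) -defP APB !mulmxA -defP.
have A'E : char_poly A' = char_poly A.
  by rewrite /A' -{2}(invmxK L) char_poly_conj // unitmx_inv.
have [ul ur] : A' = ulsubmx B' /\ 0 = ursubmx B'.
  apply: eq_row_mx; move: A'B'.
  rewrite pid_mx_row mul_mx_row mulmx0 -(submxK B') block_mxEv mul_row_col.
  by rewrite mul1mx mul0mx addr0 mulmx1 -block_mxEv block_mxKul block_mxKur.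
rewrite -(char_poly_conj B Uu) -/B' -(submxK B') -ur -ul char_poly_lblock A'E.
exact: dvdp_mulIl.
Qed.

Lemma dvdp_leq_mup (x : F) (p q : {poly F}) : q != 0 -> p %| q -> (mup x p <= mup x q)%N.
Proof.
move=> q0 pq; have p0 : p != 0 by apply: contraNneq q0 => p0; rewrite -dvd0p -p0.
by rewrite mup_geq //; apply: dvdp_trans pq; rewrite -mup_geq.
Qed.

(* The columns of P span a B-invariant subspace on which B acts as A. *)
Lemma eigen_multiset_sub_intertwine p q (A : 'M[F]_p) (B : 'M[F]_q) (P : 'M[F]_(q, p)) :
  row_free P^T -> B *m P = P *m A -> eigen_multiset_sub A B.
Proof.
move=> freeP BPA x; rewrite -char_poly_trmx -[char_poly B]char_poly_trmx.
apply: dvdp_leq_mup; first by rewrite monic_neq0 // char_poly_monic.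
by apply: (char_poly_dvd_intertwine freeP); rewrite -!trmx_mul BPA.
Qed.
End CharPoly.

Lemma in_faces (T : finType) (X : {set {set T}}) m F :
  (F \in faces X m) = (F \in X) && (#|F| == m.+1).
Proof. by rewrite inE. Qed.

Lemma faces_neq0 (T : finType) (X : {set {set T}}) m F : F \in faces X m -> F != set0.
Proof. by rewrite in_faces -card_gt0 => /andP[_ /eqP ->]. Qed.

Lemma imset_inj_subset_eq (aT rT : finType) (f : aT -> rT) (A B C : {set aT}) :
  {in C &, injective f} -> A \subset C -> B \subset C -> f @: A = f @: B -> A = B.
Proof.
move=> injf sAC sBC fAB.
suff sub (X Y : {set aT}) : X \subset C -> Y \subset C -> f @: X = f @: Y -> X \subset Y.
  by apply/eqP; rewrite eqEsubset (sub A B) ?(sub B A).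
move=> sXC sYC fXY; apply/subsetP=> x Xx.
have /imsetP[y Yy fxy] : f x \in f @: Y by rewrite -fXY imset_f.
by rewrite (injf x y (subsetP sXC x Xx) (subsetP sYC y Yy) fxy).
Qed.

Definition cofaces (T : finType) (X : {set {set T}}) m (F : {set T}) : {set {set T}} :=
  [set Fb in faces X m.+1 | F \subset Fb].

Lemma orient_sgnE (R : pzRingType) (T : finType) (F Fb : {set T}) x :
  Fb :\: F = [set x] ->
  orient_sgn R F Fb = \prod_(u in Fb) (if (enum_rank u < enum_rank x)%N then -1 else 1).
Proof.
move=> FbF; rewrite /orient_sgn -prodr_const big_mkcond [RHS]big_mkcond /=.
apply: eq_bigr => u _; rewrite inE FbF.
have -> : [exists v in [set x], enum_rank u < enum_rank v]%N = (enum_rank u < enum_rank x)%N.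
  by apply/existsP/idP => [[v /andP[/set1P -> //]] | ltux]; exists x; rewrite set11.
by case: (u \in Fb); case: (_ < _)%N.
Qed.

Section Relabel.
Variables (R : comPzRingType) (V W : finType) (phi : V -> W).

Definition inv_sgn (u v : V) : R :=
  if (enum_rank u < enum_rank v)%N && (enum_rank (phi v) < enum_rank (phi u))%N
  then -1 else 1.

(* [(-1)^(number of pairs of F whose order phi reverses)]: the sign relating
   the positive orientation of [F] to that of [phi @: F]. *)
Definition relabel_sgn (F : {set V}) : R := \prod_(u in F) \prod_(v in F) inv_sgn u v.

Lemma relabel_sgn_sq (F : {set V}) : relabel_sgn F * relabel_sgn F = 1.
Proof.
rewrite -big_split big1 // => u _; rewrite -big_split big1 // => v _.
by rewrite /inv_sgn; case: (_ && _); rewrite /= ?mulrNN mulr1.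
Qed.

Lemma relabel_sgnU1 (F : {set V}) x : x \notin F ->
  relabel_sgn (x |: F) = relabel_sgn F * \prod_(u in F) (inv_sgn x u * inv_sgn u x).
Proof.
move=> xF; rewrite /relabel_sgn.
under eq_bigr => u _ do rewrite big_setU1 //=.
rewrite big_setU1 //= [inv_sgn x x]/inv_sgn ltnn /= !big_split /=; ring.
Qed.

Lemma rank_sgn_relabel u x : u != x -> phi u != phi x ->
  (if (enum_rank u < enum_rank x)%N then -1 else 1) =
  inv_sgn x u * inv_sgn u x *
    (if (enum_rank (phi u) < enum_rank (phi x))%N then -1 else 1) :> R.
Proof.
move=> ux pux; rewrite /inv_sgn.
case: (ltngtP (enum_rank u) (enum_rank x)) => [_ | _ | /ord_inj/enum_rank_inj equx];
  last by rewrite equx eqxx in ux.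
all: case: (ltngtP (enum_rank (phi u)) (enum_rank (phi x)))
  => [_ | _ | /ord_inj/enum_rank_inj eqpux]; last by rewrite eqpux eqxx in pux.
all: by rewrite /= ?(mulr1, mul1r, mulrNN).
Qed.

Lemma orient_sgn_imset (F Fb : {set V}) :
  {in Fb &, injective phi} -> F \subset Fb -> #|Fb| = #|F|.+1 ->
  orient_sgn R F Fb = relabel_sgn F * relabel_sgn Fb * orient_sgn R (phi @: F) (phi @: Fb).
Proof.
move=> injphi sFFb cardFb.
have /cards1P[x FbF] : #|Fb :\: F| == 1%N by rewrite cardsDS // cardFb subSnn.
have /setDP[xFb xF] : x \in Fb :\: F by rewrite FbF set11.
have defFb : Fb = x |: F by rewrite -FbF setUC -{1}(setID Fb F) (setIidPr sFFb).
have pxF : phi x \notin phi @: F.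
  apply/imsetP => -[y yF /injphi eqxy]; move: xF.
  by rewrite eqxy ?yF // (subsetP sFFb).
have phiFbF : phi @: Fb :\: phi @: F = [set phi x].
  by rewrite defFb imsetU1 setDUl setDv setU0; apply/setDidPl; rewrite disjoints1.
have injF : {in F &, injective phi}.
  by move=> a b aF bF; apply: injphi; apply: (subsetP sFFb).
rewrite (orient_sgnE _ FbF) (orient_sgnE _ phiFbF) defFb relabel_sgnU1 // imsetU1.
rewrite !big_setU1 //= !ltnn (big_imset _ injF) /= !mul1r mulrA relabel_sgn_sq mul1r.
rewrite -big_split; apply: eq_bigr => u uF; apply: rank_sgn_relabel.
  by apply: contraNneq xF => <-.
by apply: contraNneq pxF => <-; apply: imset_f.
Qed.

End Relabel.

Section StrongCovering.
Variables (V W : finType) (K : {set {set V}}) (L : {set {set W}}) (phi : V -> W).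
Hypotheses (complexK : is_complex K) (coverK : strong_covering K L phi).

Lemma covering_inj F : F \in K -> {in F &, injective phi}.
Proof.
move=> FK; have [[mapK _ sheets] _] := coverK.
have [P [_ sheetP _ coverP]] := sheets _ (mapK F FK).
have [Fi PFi sFFi] := (coverP F FK).1 (subxx _).
have [_ injFi _] := sheetP Fi PFi.
by move=> x y /(subsetP sFFi) xFi /(subsetP sFFi); apply: injFi.
Qed.

Lemma imset_faces m F : F \in faces K m -> phi @: F \in faces L m.
Proof.
rewrite !in_faces => /andP[FK cardF]; have [[mapK _ _] _] := coverK.
by rewrite mapK // (card_in_imset (covering_inj FK)).
Qed.

Lemma lift_face m G : G \in faces L m -> exists2 F, F \in faces K m & phi @: F = G.
Proof.
rewrite in_faces => /andP[GL /eqP cardG]; have [[_ _ sheets] _] := coverK.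
have [P [/set0Pn[Fi PFi] sheetP _ _]] := sheets _ GL.
have [FiK injFi phiFi] := sheetP Fi PFi.
by exists Fi => //; rewrite in_faces FiK -cardG -phiFi (card_in_imset injFi) /=.
Qed.

Lemma lift_subface m Fb G : Fb \in K -> G \in faces L m -> G \subset phi @: Fb ->
  exists2 F, F \in faces K m & F \subset Fb /\ phi @: F = G.
Proof.
move=> FbK /[dup] /faces_neq0 G0; rewrite in_faces => /andP[_ /eqP cardG] sGFb.
pose F := [set x in Fb | phi x \in G].
have sFFb : F \subset Fb by apply/subsetP => x; rewrite inE => /andP[].
have phiF : phi @: F = G.
  apply/setP => y; apply/imsetP/idP => [[x] | Gy]; first by rewrite inE => /andP[_ Gx] ->.
  have /imsetP[x Fbx yx] := subsetP sGFb y Gy.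
  by exists x; rewrite // inE Fbx -yx.
have injF : {in F &, injective phi}.
  by move=> x y /(subsetP sFFb) Fbx /(subsetP sFFb); apply: covering_inj.
have [_ closedK] := complexK.
exists F => //; rewrite in_faces -cardG -phiF (card_in_imset injF) eqxx andbT.
by apply: (closedK Fb) => //; apply: contraNneq G0 => F0; rewrite -phiF F0 imset0.
Qed.

Lemma cofaces_imset_inj m F : F \in faces K m ->
  {in cofaces K m F &, injective (fun Fb : {set V} => phi @: Fb)}.
Proof.
move=> /faces_neq0/set0Pn[x Fx] Fb1 Fb2.
rewrite !inE => /andP[/andP[Fb1K _] sFFb1] /andP[/andP[Fb2K _] sFFb2] phiFb12.
have [[mapK _ sheets] _] := coverK.
have [P [_ sheetP disjP coverP]] := sheets _ (mapK _ Fb1K).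
have [Fi PFi sFb1Fi] := (coverP Fb1 Fb1K).1 (subxx _).
have := (coverP Fb2 Fb2K).1; rewrite -phiFb12 => /(_ (subxx _))[Fj PFj sFb2Fj].
have xFi : x \in Fi by apply: (subsetP sFb1Fi); apply: (subsetP sFFb1).
have xFj : x \in Fj by apply: (subsetP sFb2Fj); apply: (subsetP sFFb2).
have eqFij : Fi = Fj.
  apply/eqP/negP => /negP/(disjP _ _ PFi PFj)/disjointFr/(_ xFi).
  by rewrite xFj.
have [_ injFi _] := sheetP Fi PFi.
by apply: (imset_inj_subset_eq injFi sFb1Fi _ phiFb12); rewrite eqFij.
Qed.

Lemma imset_cofaces m F : F \in faces K m ->
  [set phi @: Fb | Fb : {set V} in cofaces K m F] = cofaces L m (phi @: F).
Proof.
move=> FmK; apply/setP => Gb; rewrite inE; apply/imsetP/andP => [[Fb] | [GbL sFGb]].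
  by rewrite inE => /andP[FbK sFFb] ->; rewrite imset_faces // imsetS.
have [_ lift] := coverK.
have [Fb FbK [sFFb <-]] := lift m _ Gb (imset_faces FmK) GbL sFGb F FmK erefl.
by exists Fb; rewrite // inE FbK.
Qed.

Lemma face_deg_imset m F : F \in faces K m -> face_deg L m (phi @: F) = face_deg K m F.
Proof.
move=> FmK; rewrite /face_deg -[[set _ in _ | _]]/(cofaces L m _) -imset_cofaces //.
exact: card_in_imset (cofaces_imset_inj FmK).
Qed.

End StrongCovering.

Definition up_laplacian_coef (R : fieldType) (T : finType) (X : {set {set T}}) n
    (w : {set T} -> R) (F F' : {set T}) : R :=
  \sum_(Fb in cofaces X n F | F' \subset Fb) w Fb / w F * orient_sgn R F Fb * orient_sgn R F' Fb.

Lemma up_laplacianE (R : fieldType) (T : finType) (X : {set {set T}}) n (w : {set T} -> R) :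
  up_laplacian X n w =
  \matrix_(i, j) up_laplacian_coef X n w (enum_val i) (enum_val j).
Proof.
apply/matrixP => i j; rewrite !mxE /= /up_laplacian_coef.
by apply: eq_bigl => Fb; rewrite /cofaces !inE subUset !andbA.
Qed.

Section Pullback.
Variables (R : fieldType) (V W : finType) (K : {set {set V}}) (L : {set {set W}}).
Variables (phi : V -> W) (n : nat).
Hypotheses (complexK : is_complex K) (coverK : strong_covering K L phi).

(* Pulling back cochains along phi, in the bases of positively oriented faces:
   the oriented face phi[F] is [phi @: F] up to the sign relabel_sgn. *)
Definition pullback_coef (F : {set V}) (G : {set W}) : R :=
  if phi @: F == G then relabel_sgn R phi F else 0.

Definition pullback_mx : 'M[R]_(#|faces K n|, #|faces L n|) :=
  \matrix_(i, j) pullback_coef (enum_val i) (enum_val j).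

Lemma pullback_coboundary Fb G : Fb \in faces K n.+1 -> G \in faces L n ->
  \sum_(F in faces K n | F \subset Fb) orient_sgn R F Fb * pullback_coef F G =
  if G \subset phi @: Fb then relabel_sgn R phi Fb * orient_sgn R G (phi @: Fb) else 0.
Proof.
rewrite in_faces => /andP[FbK /eqP cardFb] GnL.
have injFb := covering_inj coverK FbK.
have [sGFb | nsGFb] := boolP (G \subset phi @: Fb); last first.
  apply: big1 => F /andP[_ sFFb]; rewrite /pullback_coef.
  case: eqP => [phiF | _]; last by rewrite mulr0.
  by rewrite -phiF (imsetS _ sFFb) in nsGFb.
have [F0 F0nK [sF0Fb phiF0]] := lift_subface complexK coverK FbK GnL sGFb.
rewrite (bigD1 F0) /=; last by rewrite F0nK.
rewrite big1 ?addr0 => [|F /andP[/andP[_ sFFb] neqFF0]]; last first.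
  rewrite /pullback_coef; case: eqP => [phiF | _]; rewrite ?mulr0 //.
  by case/eqP: neqFF0; apply: (imset_inj_subset_eq injFb sFFb sF0Fb); rewrite phiF phiF0.
have cardF0 : #|Fb| = #|F0|.+1 by move: F0nK; rewrite in_faces cardFb => /andP[_ /eqP ->].
rewrite /pullback_coef phiF0 eqxx (orient_sgn_imset _ injFb sF0Fb cardF0) phiF0.
by rewrite [LHS]mulrC !mulrA relabel_sgn_sq mul1r.
Qed.

Lemma sum_cofaces_imset m F (f : {set W} -> R) : F \in faces K m ->
  \sum_(Fb in cofaces K m F) f (phi @: Fb) = \sum_(Gb in cofaces L m (phi @: F)) f Gb.
Proof.
move=> FmK; rewrite -(imset_cofaces coverK) // big_imset //.
exact: (cofaces_imset_inj coverK FmK).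
Qed.

Lemma pullback_mx_free : row_free pullback_mx^T.
Proof.
pose lift G := odflt set0 [pick F in faces K n | phi @: F == G].
have liftP G : G \in faces L n -> lift G \in faces K n /\ phi @: lift G = G.
  move=> GnL; rewrite /lift; case: pickP => [F /andP[FnK /eqP] | noF] //=.
  have [F FnK phiF] := lift_face coverK GnL.
  by have := noF F; rewrite FnK phiF eqxx.
apply/row_freeP; exists (\matrix_(k, j)
  if enum_val k == lift (enum_val j) then relabel_sgn R phi (enum_val k) else 0).
apply/matrixP => j j'; rewrite !mxE; under eq_bigr do rewrite !mxE.
rewrite -(big_enum_val (A := [in faces K n]) (fun F => pullback_coef F (enum_val j) *
  (if F == lift (enum_val j') then relabel_sgn R phi F else 0))) /=.
have [liftnK phi_lift] := liftP _ (enum_valP j').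
rewrite (bigD1 (lift (enum_val j'))) //= big1 ?addr0 => [|F /andP[_ /negbTE->]]; last first.
  by rewrite mulr0.
rewrite eqxx /pullback_coef phi_lift (inj_eq enum_val_inj) eq_sym.
by case: eqP => _; rewrite ?relabel_sgn_sq ?mul0r.
Qed.

Variables (wK : {set V} -> R) (wL : {set W} -> R).
Hypotheses (wK_cofaces : {in faces K n.+1, forall Fb, wK Fb = wL (phi @: Fb)})
           (wK_faces : {in faces K n, forall F, wK F = wL (phi @: F)}).

Lemma up_laplacian_coef_pullback F G : F \in faces K n -> G \in faces L n ->
  \sum_(F' in faces K n) up_laplacian_coef K n wK F F' * pullback_coef F' G =
  relabel_sgn R phi F * up_laplacian_coef L n wL (phi @: F) G.
Proof.
move=> FnK GnL.
under eq_bigr => F' _ do rewrite /up_laplacian_coef big_distrl big_mkcondr /=.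
rewrite exchange_big /= [in RHS]/up_laplacian_coef big_mkcondr big_distrr /=.
rewrite -sum_cofaces_imset //; apply: eq_bigr => Fb; rewrite inE => /andP[Fbn1K sFFb].
rewrite -big_mkcondr /=.
under eq_bigr do rewrite -mulrA.
rewrite -big_distrr /= pullback_coboundary //.
case: ifP => _; last by rewrite !mulr0.
have cardFb : #|Fb| = #|F|.+1.
  by move: Fbn1K FnK; rewrite !in_faces => /andP[_ /eqP ->] /andP[_ /eqP ->].
have FbK : Fb \in K by move: Fbn1K; rewrite in_faces => /andP[].
rewrite (orient_sgn_imset _ (covering_inj coverK FbK) sFFb cardFb).
rewrite wK_cofaces // wK_faces // -[RHS]mul1r -(relabel_sgn_sq R phi Fb); ring.
Qed.

Lemma up_laplacian_pullback_mx :
  up_laplacian K n wK *m pullback_mx = pullback_mx *m up_laplacian L n wL.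
Proof.
apply/matrixP => i j; rewrite !up_laplacianE !mxE.
under eq_bigr do rewrite !mxE; under [RHS]eq_bigr do rewrite !mxE.
rewrite -(big_enum_val (A := [in faces K n]) (fun F' =>
  up_laplacian_coef K n wK (enum_val i) F' * pullback_coef F' (enum_val j))) /=.
rewrite -(big_enum_val (A := [in faces L n]) (fun G =>
  pullback_coef (enum_val i) G * up_laplacian_coef L n wL G (enum_val j))) /=.
rewrite up_laplacian_coef_pullback ?enum_valP //.
rewrite (bigD1 (phi @: enum_val i)) /= ?(imset_faces coverK (enum_valP i)) //.
rewrite big1 ?addr0 => [|G /andP[_ neqG]]; first by rewrite /pullback_coef eqxx.
by rewrite /pullback_coef eq_sym (negbTE neqG) mul0r.
Qed.

Lemma eigen_multiset_sub_up_laplacian :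
  eigen_multiset_sub (up_laplacian L n wL) (up_laplacian K n wK).
Proof. exact: eigen_multiset_sub_intertwine pullback_mx_free up_laplacian_pullback_mx. Qed.

End Pullback.

Theorem corollary3p6 (R : realType) (V W : finType)
  (K : {set {set V}}) (L : {set {set W}}) (phi : V -> W) (n : nat) :
  is_complex K -> is_complex L -> strong_covering K L phi ->
  eigen_multiset_sub (comb_up_laplacian R L n) (comb_up_laplacian R K n) /\
  eigen_multiset_sub (norm_up_laplacian R L n) (norm_up_laplacian R K n).
Proof.
move=> complexK _ coverK.
split; first by apply: (eigen_multiset_sub_up_laplacian complexK coverK).
apply: (eigen_multiset_sub_up_laplacian complexK coverK) => X XK;
  have := imset_faces coverK XK; move: (XK); rewrite !in_faces.
- by move=> /andP[_ /eqP->] /andP[_ /eqP->]; rewrite eqxx.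
- by rewrite (face_deg_imset coverK XK) => /andP[_ /eqP->] /andP[_ /eqP->]; rewrite ltn_eqF.
Qed.
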